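(* In the Part I procedure, consider a growth step in phase $\Delta$ out of an even vertex $x$ to an unlabelled vertex $y$, which adds $y$ (odd) and $\mathit{mate}(y)$ (even) to $S$. Let $z$ be any even vertex in $S$ adjacent to $\mathit{mate}(y)$. Then $\mathrm{lcp}(z)\ge\mathrm{lcp}(x)$; in particular $\mathrm{lcp}(z)+\mathrm{lcp}(\mathit{mate}(y))\ge 2\Delta-2$.
   Context: Let $G=(V,E)$ be a finite undirected graph and $M$ a matching in $G$; free vertices and $\mathit{mate}(v)$ are as usual. The Part I procedure maintains a search structure $S$: a forest whose nodes are either single (odd) vertices or blossoms (disjoint vertex sets with a distinguished base vertex), each tree rooted at a blossom containing a free vertex. Vertices in $S$ are labelled even (those in blossoms) or odd; vertices not in $S$ are unlabelled. A vertex is born even/odd according to the label it receives when inserted. The procedure maintains $\mathrm{lcp}(v)$ for even vertices and $\mathrm{lcp}_{\mathrm{odd}}(v)$ for vertices born odd. The blossom nodes currently in $S$ are the maximal blossoms. Phase $0$: every free vertex $v$ becomes the root of its own tree as a trivial blossom $\{v\}$ with base $v$, even, $\mathrm{lcp}(v)=0$. For $\Delta=1,2,\dots$, phase $\Delta$ does: (i) if $\Delta$ is even, growth steps: while some even vertex $v$ with $\mathrm{lcp}(v)=\Delta-2$ has a neighbour $x$ not in $S$, add $x$ as an odd child of the blossom containing $v$ with $\mathrm{lcp}_{\mathrm{odd}}(x)=\Delta-1$, and $\mathit{mate}(x)$ as a child of $x$, as a trivial even blossom with $\mathrm{lcp}(\mathit{mate}(x))=\Delta$; (ii) bridge steps: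 while there is a non-matching edge $xy$ with $x,y$ even, in different maximal blossoms $B_x,B_y$, and $\mathrm{lcp}(x)+\mathrm{lcp}(y)=2\Delta-2$: if $B_x,B_y$ lie in different trees the procedure stops; otherwise let $B$ be the lowest common ancestor of $B_x,B_y$; every odd vertex $z$ on the tree paths from $B_x$ and $B_y$ to $B$ becomes even with $\mathrm{lcp}(z)=\mathrm{lcp}(x)+1+\mathrm{lcp}(y)-\mathrm{lcp}_{\mathrm{odd}}(z)$, and $B$ together with all blossoms and odd vertices on both paths is merged into one new blossom with base equal to the base of $B$, replacing $B$ in the tree. *)

From mathcomp Require Import all_boot.
Set Implicit Arguments. Unset Strict Implicit. Unset Printing Implicit Defensive.

(* A matching is encoded by a total function mt : T -> T with
   mt v = v  iff  v is free, and mt (mt v) = v, and v -- mt v an edge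
   whenever v is matched. *)
Definition is_matching (T : finType) (e : rel T) (mt : T -> T) : Prop :=
  involutive mt /\ forall v, mt v != v -> e v (mt v).

(* State of the search structure S.
   - inS  : vertices in S
   - evn  : even vertices (those lying in blossoms); other vertices of S are odd
   - lcp  : lcp(v), meaningful for even v
   - lcpo : lcp_odd(v), meaningful for vertices born odd
   - base : the node of S containing v, identified by its base vertex
            (an odd vertex forms a node by itself, with itself as identifier)
   - par  : parent node of a node (identified by base), None for roots. *)
Record state (T : finType) := State {
  inS : {set T};
  evn : {set T};
  lcp : T -> nat;
  lcpo : T -> nat;
  base : T -> T;
  par : T -> option T }.

Definition upd (T : eqType) (A : Type) (f : T -> A) (a : T) (y : A) : T -> A :=
  fun u => if u == a then y else f u.

Section Procedure.
Variables (T : finType) (e : rel T) (mt : T -> T).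

Definition anc (s : state T) : rel T :=
  connect (fun n m => par s n == Some m).

Definition init_state : state T :=
  State [set v | mt v == v] [set v | mt v == v] (fun _ => 0) (fun _ => 0)
        id (fun _ => None).

Definition growth_enabled (D : nat) (s : state T) (v x : T) : Prop :=
  [/\ ~~ odd D, v \in evn s, lcp s v = D - 2, e v x & x \notin inS s].

Definition grow (D : nat) (s : state T) (v x : T) : state T :=
  State (x |: (mt x |: inS s)) (mt x |: evn s)
        (upd (lcp s) (mt x) D) (upd (lcpo s) x D.-1)
        (upd (upd (base s) x x) (mt x) (mt x))
        (upd (upd (par s) x (Some (base s v))) (mt x) (Some x)).

Definition growth_step (D : nat) (s : state T) (v x : T) (s' : state T) : Prop :=
  growth_enabled D s v x /\ s' = grow D s v x.

Definition bridge_edge (D : nat) (s : state T) (a b : T) : Prop :=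
  [/\ a \in evn s, b \in evn s, e a b, mt a != b &
      base s a != base s b /\ lcp s a + lcp s b = 2 * D - 2].

Definition same_tree (s : state T) (a b : T) : Prop :=
  exists r, anc s (base s a) r /\ anc s (base s b) r.

Definition is_lca (s : state T) (n1 n2 B : T) : Prop :=
  [/\ anc s n1 B, anc s n2 B &
      forall C, anc s n1 C -> anc s n2 C -> anc s B C].

(* merging the tree paths from B_a and B_b to B into a new blossom with
   the base of B, replacing B in the tree *)
Definition merge (s : state T) (a b B : T) : state T :=
  let onP N := (anc s (base s a) N && anc s N B) || (anc s (base s b) N && anc s N B) in
  let newev z := [&& z \in inS s, z \notin evn s & onP (base s z)] in
  State (inS s) (evn s :|: [set z | newev z])
        (fun z => if newev z then lcp s a + 1 + lcp s b - lcpo s z else lcp s z)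
        (lcpo s)
        (fun u => if (u \in inS s) && onP (base s u) then B else base s u)
        (fun n => if n == B then par s n else
                  match par s n with
                  | Some p => Some (if onP p then B else p)
                  | None => None end).

(* configurations: (phase, in growth part?, state) *)
Definition config := (nat * bool * state T)%type.

Inductive step : config -> config -> Prop :=
| StepGrow D s v x :
    growth_enabled D s v x -> step (D, true, s) (D, true, grow D s v x)
| StepEndGrow D s :
    (forall v x, ~ growth_enabled D s v x) -> step (D, true, s) (D, false, s)
| StepBridge D s a b B :
    bridge_edge D s a b -> same_tree s a b -> is_lca s (base s a) (base s b) B ->
    step (D, false, s) (D, false, merge s a b B)
| StepEndPhase D s :
    (forall a b, ~ bridge_edge D s a b) -> step (D, false, s) (D.+1, true, s).
(* A bridge edge between different trees makes the procedure stop: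
   no step is taken on that choice. *)

Inductive reachable : config -> Prop :=
| ReachInit : reachable (1, true, init_state)
| ReachStep c c' : reachable c -> step c c' -> reachable c'.

End Procedure.

From Pilot Require Import Defs.
From mathcomp Require Import all_boot.
From mathcomp Require Import zify.
Set Implicit Arguments. Unset Strict Implicit. Unset Printing Implicit Defensive.

(* During the growth part of phase D, every even vertex with an unlabelled
   neighbour has lcp >= D - 2; once growth is exhausted the bound improves
   to D - 1, since lcp is even and lcp = D - 2 would still enable a growth
   step. Bridge steps only create even vertices with lcp 2D - 1 - lcp_odd,
   which is large because lcp_odd < D. A growth step out of x in phase D
   has lcp x = D - 2 and mate(y) is new, so any other even neighbour z of
   mate(y) sees the unlabelled vertex mate(y) and thus lcp z >= D - 2. *)

Section SearchInvariant.
Variables (T : finType) (e : rel T) (mt : T -> T).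
Hypothesis mtK : involutive mt.

Record search_inv (D : nat) (growing : bool) (s : state T) : Prop := {
  phase_gt0 : 0 < D;
  even_inS : forall v, v \in evn s -> v \in inS s;
  mate_inS : forall v, v \in inS s -> mt v \in inS s;
  lcp_even : forall v, v \in evn s -> ~~ odd (lcp s v);
  lcpo_odd : forall v, v \in inS s -> v \notin evn s -> odd (lcpo s v);
  lcpo_lt_phase : forall v, lcpo s v < D;
  lcp_unlabelled_nbr : forall v w, v \in evn s -> e v w -> w \notin inS s ->
    (if growing then D else D.+1) <= lcp s v + 2 }.

Lemma search_inv_init : search_inv 1 true (init_state mt).
Proof.
split=> //= v; rewrite !inE; first by move=> /eqP vE; rewrite mtK vE.
by move=> ->.
Qed.

Lemma search_inv_grow D s v x :
  search_inv D true s -> growth_enabled e D s v x ->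
  search_inv D true (grow mt D s v x).
Proof.
move=> [D_gt0 evS mtS lcpE lcpoO lcpoD nbr] [D_even _ _ _ _].
split=> //= [u|u|u|u|u|u w]; rewrite /upd ?inE.
- by case/orP=> [->|/evS ->]; rewrite ?orbT.
- by case/or3P=> [/eqP->|/eqP->|/mtS ->]; rewrite ?mtK ?eqxx ?orbT.
- by case: eqP => [//|_ /lcpE].
- case: (u =P x) => [_ _ _|ux uS]; first by rewrite -subn1 oddB // (negbTE D_even).
  rewrite negb_or => /andP[umx uE]; apply: lcpoO uE.
  by case/or3P: uS => //; rewrite (negbTE umx).
- by case: eqP => _; [lia | exact: lcpoD].
- case: eqP => [_|_ /= uE uw]; first lia.
  by rewrite !negb_or => /and3P[_ _ wS]; apply: nbr uE uw wS.
Qed.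

Lemma search_inv_end_growth D s :
  search_inv D true s -> (forall v x, ~ growth_enabled e D s v x) ->
  search_inv D false s.
Proof.
move=> [D_gt0 evS mtS lcpE lcpoO lcpoD nbr] stuck.
split=> //= v w vE vw wS; have := nbr v w vE vw wS.
rewrite leq_eqVlt => /orP[/eqP D_eq|//].
exfalso; apply: (stuck v w); split=> //; last lia.
by rewrite D_eq oddD /= addbF; apply: lcpE.
Qed.

Lemma search_inv_merge D s a b B :
  search_inv D false s -> bridge_edge e mt D s a b ->
  search_inv D false (Defs.merge s a b B).
Proof.
move=> [D_gt0 evS mtS lcpE lcpoO lcpoD nbr] [_ _ _ _ [_ sum_ab]].
split=> //= [u|u|u|u w]; rewrite !inE.
- by case/orP=> [/evS|/and3P[]].
- case/orP=> [uE|/and3P[uS uN uP]]; first by rewrite uE andbF /= lcpE.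
  rewrite uS uN uP /= oddB; last by have := lcpoD u; lia.
  have -> : lcp s a + 1 + lcp s b = (D.-1).*2.+1 by rewrite -muln2; lia.
  by rewrite /= odd_double (lcpoO u uS uN).
- by move=> uS; rewrite negb_or => /andP[uN _]; apply: lcpoO.
- case/orP=> [uE|/and3P[uS uN uP]] uw wS.
    by rewrite uE andbF; apply: nbr uE uw wS.
  by rewrite uS uN uP /=; have := lcpoD u; lia.
Qed.

Lemma search_inv_end_phase D s :
  search_inv D false s -> search_inv D.+1 true s.
Proof.
case=> D_gt0 evS mtS lcpE lcpoO lcpoD nbr.
by split=> // v; exact: ltnW (lcpoD v).
Qed.

Lemma search_inv_reachable (c : config T) :
  reachable e mt c -> search_inv c.1.1 c.1.2 c.2.
Proof.
elim=> {c} [|c c' _ I st]; first exact: search_inv_init.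
case: c c' / st I => /= [D s v x vx|D s stuck|D s a b B ab _ _|D s _] I.
- exact: search_inv_grow vx.
- exact: search_inv_end_growth stuck.
- exact: search_inv_merge ab.
- exact: search_inv_end_phase.
Qed.

End SearchInvariant.

Theorem lemma6 (T : finType) (e : rel T) (mt : T -> T) :
  symmetric e -> irreflexive e -> is_matching e mt ->
  forall (D : nat) (s s' : state T) (x y : T),
    reachable e mt (D, true, s) ->
    growth_step e mt D s x y s' ->
    forall z : T, z \in evn s' -> e z (mt y) ->
      lcp s' x <= lcp s' z /\ 2 * D - 2 <= lcp s' z + lcp s' (mt y).
Proof.
move=> _ e_irr [mtK _] D s s' x y R [[_ xE lcpx _ yS] ->] z.
have [_ evS mtS _ _ _ nbr] := search_inv_reachable mtK R.
have mtyS : mt y \notin inS s by apply: contra yS => /mtS; rewrite mtK.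
have not_mty v : v \in evn s -> (v == mt y) = false.
  by move=> vE; apply: contraNF mtyS => /eqP <-; apply: evS.
rewrite /= /upd !inE => /orP[/eqP->|zE]; first by rewrite e_irr.
rewrite (not_mty x) // (not_mty z) // eqxx => z_mty.
by have := nbr z (mt y) zE z_mty mtyS; rewrite /=; lia.
Qed.
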